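(* Let $\mathbb{C}$ be a locally small category and $\mathbb{C}_{\mathit{fin}}$ a full subcategory satisfying (C1)–(C5) below. Let $U:\mathbb{C}^*\to\mathbb{C}$ be a reasonable expansion with unique restrictions, let $F$ be a homogeneous locally finite object of $\mathbb{C}$ and let $G=\mathrm{Aut}(F)$. Then for all $\mathcal{F},\mathcal{F}'\in U^{-1}(F)$ we have $\mathcal{F}'\in\overline{\mathcal{F}^G}$ (closure in the topology $\sigma_F$) if and only if $\mathrm{Age}(\mathcal{F}')\subseteq\mathrm{Age}(\mathcal{F})$.
   Context: Write $A\to B$ if $\hom(A,B)\ne\varnothing$. Conditions: (C1) all morphisms of $\mathbb{C}$ are monomorphisms; (C2) $\mathrm{Ob}(\mathbb{C}_{\mathit{fin}})$ is a set; (C3) $\hom(A,B)$ is finite for $A,B\in\mathrm{Ob}(\mathbb{C}_{\mathit{fin}})$; (C4) for every $F\in\mathrm{Ob}(\mathbb{C})$ there is $A\in\mathrm{Ob}(\mathbb{C}_{\mathit{fin}})$ with $A\to F$; (C5) for every $B\in\mathrm{Ob}(\mathbb{C}_{\mathit{fin}})$ the set $\{A\in\mathrm{Ob}(\mathbb{C}_{\mathit{fin}}):A\to B\}$ is finite. $F$ is homogeneous if for all $A\in\mathrm{Ob}(\mathbb{C}_{\mathit{fin}})$ and $e_1,e_2\in\hom(A,F)$ there is $g\in\mathrm{Aut}(F)$ with $g\cdot e_1=e_2$. $F$ is locally finite if for all $A,B\in\mathrm{Ob}(\mathbb{C}_{\mathit{fin}})$, $e\in\hom(A,F)$, $f\in\hom(B,F)$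 there exist $D\in\mathrm{Ob}(\mathbb{C}_{\mathit{fin}})$, $r\in\hom(D,F)$, $p\in\hom(A,D)$, $q\in\hom(B,D)$ with $r\cdot p=e$, $r\cdot q=f$, such that for every $H\in\mathrm{Ob}(\mathbb{C})$, $r'\in\hom(H,F)$, $p'\in\hom(A,H)$, $q'\in\hom(B,H)$ with $r'\cdot p'=e$, $r'\cdot q'=f$ there is $s\in\hom(D,H)$ with $r'\cdot s=r$, $s\cdot p=p'$, $s\cdot q=q'$. An expansion of $\mathbb{C}$ is a locally small category $\mathbb{C}^*$ with a functor $U:\mathbb{C}^*\to\mathbb{C}$ surjective on objects and injective on hom-sets; we regard $\hom_{\mathbb{C}^*}(\mathcal{A},\mathcal{B})\subseteq\hom_{\mathbb{C}}(U\mathcal{A},U\mathcal{B})$, and $U^{-1}(A)=\{\mathcal{A}:U(\mathcal{A})=A\}$. $U$ is reasonable if for every $e\in\hom(A,B)$ and $\mathcal{A}\in U^{-1}(A)$ there is $\mathcal{B}\in U^{-1}(B)$ with $e\in\hom(\mathcal{A},\mathcal{B})$; it has unique restrictions if for every $\mathcal{B}$ and $e\in\hom(A,U(\mathcal{B}))$ there is exactly one $\mathcal{A}\in U^{-1}(A)$ with $e\in\hom(\mathcal{A},\mathcal{B})$. $\mathbb{C}^*_{\mathit{fin}}$ is the full subcategory of $\mathbb{C}^*$ on $\bigcup\{U^{-1}(A):A\in\mathrm{Ob}(\mathbb{C}_{\mathit{fin}})\}$, and for $\mathcal{F}\in\mathrm{Ob}(\mathbb{C}^* )$, $\mathrm{Age}(\mathcal{F})=\{\mathcal{A}\in\mathrm{Ob}(\mathbb{C}^*_{\mathit{fin}}):\mathcal{A}\to\mathcal{F}\}$.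 For $g\in G$ and $\mathcal{F}\in U^{-1}(F)$, $\mathcal{F}^g$ is the unique $\mathcal{F}'\in U^{-1}(F)$ with $g^{-1}\in\hom(\mathcal{F},\mathcal{F}')$, and $\mathcal{F}^G=\{\mathcal{F}^g:g\in G\}$. $\sigma_F$ is the topology on $U^{-1}(F)$ generated by the sets $N(e,\mathcal{A})=\{\mathcal{F}\in U^{-1}(F):e\in\hom(\mathcal{A},\mathcal{F})\}$ for $\mathcal{A}\in\mathrm{Ob}(\mathbb{C}^*_{\mathit{fin}})$ and $e\in\hom(U(\mathcal{A}),F)$. *)

From Stdlib Require Import List.

Set Implicit Arguments.
Unset Strict Implicit.

Record Category := {
  Ob :> Type;
  Hom : Ob -> Ob -> Type;
  idm : forall A : Ob, Hom A A;
  comp : forall A B C : Ob, Hom B C -> Hom A B -> Hom A C;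
  comp_assoc : forall A B C D (f : Hom A B) (g : Hom B C) (h : Hom C D),
      comp h (comp g f) = comp (comp h g) f;
  comp_idl : forall A B (f : Hom A B), comp (idm B) f = f;
  comp_idr : forall A B (f : Hom A B), comp f (idm A) = f
}.

Arguments Hom {c} A B.
Arguments idm {c} A.
Arguments comp {c A B C} g f.

Section Defs.
Variable C : Category.

Definition arrow (A B : C) : Prop := inhabited (Hom A B).

(** The full subcategory C_fin is given by a predicate [fin] on objects. *)

Definition C1 : Prop :=
  forall (A B : C) (f : Hom A B) (X : C) (g h : Hom X A),
    comp f g = comp f h -> g = h.

(* (C2) Ob(C_fin) is a set: automatic in type theory. *)

Definition C3 (fin : C -> Prop) : Prop :=
  forall A B : C, fin A -> fin B ->
    exists l : list (Hom A B), forall f : Hom A B, In f l.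

Definition C4 (fin : C -> Prop) : Prop :=
  forall F : C, exists A : C, fin A /\ arrow A F.

Definition C5 (fin : C -> Prop) : Prop :=
  forall B : C, fin B ->
    exists l : list C, forall A : C, fin A -> arrow A B -> In A l.

Definition is_aut (F : C) (g : Hom F F) : Prop :=
  exists h : Hom F F, comp g h = idm F /\ comp h g = idm F.

Definition homogeneous (fin : C -> Prop) (F : C) : Prop :=
  forall A : C, fin A -> forall e1 e2 : Hom A F,
    exists g : Hom F F, is_aut g /\ comp g e1 = e2.

Definition locally_finite (fin : C -> Prop) (F : C) : Prop :=
  forall (A B : C), fin A -> fin B -> forall (e : Hom A F) (f : Hom B F),
    exists (D : C) (r : Hom D F) (p : Hom A D) (q : Hom B D),
      fin D /\ comp r p = e /\ comp r q = f /\
      forall (H : C) (r' : Hom H F) (p' : Hom A H) (q' : Hom B H),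
        comp r' p' = e -> comp r' q' = f ->
        exists s : Hom D H, comp r' s = r /\ comp s p = p' /\ comp s q = q'.

End Defs.

(** Objects of C* are pairs (A, a) with a : Fib A (so U(A,a) = A and
    U^{-1}(A) = Fib A), and hom_{C*}((A,a),(B,b)) is the subset of hom_C(A,B)
    given by the predicate [ehom a b]; it contains identities and is closed
    under composition (so that U is a faithful functor). *)
Record Expansion (C : Category) := {
  Fib : C -> Type;
  ehom : forall (A B : C), Fib A -> Fib B -> Hom A B -> Prop;
  ehom_id : forall (A : C) (a : Fib A), ehom a a (idm A);
  ehom_comp : forall (A B D : C) (a : Fib A) (b : Fib B) (d : Fib D)
      (f : Hom A B) (g : Hom B D),
      ehom a b f -> ehom b d g -> ehom a d (comp g f);
  fib_surj : forall A : C, inhabited (Fib A)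
}.

Arguments Fib {C} e A.
Arguments ehom {C} e {A B} a b f.

Section ExpDefs.
Variables (C : Category) (E : Expansion C).

Definition reasonable : Prop :=
  forall (A B : C) (e : Hom A B) (a : Fib E A),
    exists b : Fib E B, ehom E a b e.

Definition unique_restrictions : Prop :=
  forall (B : C) (b : Fib E B) (A : C) (e : Hom A B),
    exists! a : Fib E A, ehom E a b e.

Definition Age (fin : C -> Prop) (F : C) (FF : Fib E F)
  (A : C) (a : Fib E A) : Prop :=
  fin A /\ exists e : Hom A F, ehom E a FF e.

(** FF^g is the (unique) FF' with g^{-1} in hom(FF, FF');
    the orbit FF^G = { FF^g : g in Aut(F) }. *)
Definition is_conj (F : C) (FF : Fib E F) (g : Hom F F) (FF' : Fib E F) : Prop :=
  exists ginv : Hom F F,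
    comp g ginv = idm F /\ comp ginv g = idm F /\ ehom E FF FF' ginv.

Definition orbit (F : C) (FF : Fib E F) (FF' : Fib E F) : Prop :=
  exists g : Hom F F, is_aut g /\ is_conj FF g FF'.

Definition subbasic (fin : C -> Prop) (F : C) (O : Fib E F -> Prop) : Prop :=
  exists (A : C) (a : Fib E A) (e : Hom A F),
    fin A /\ forall FF : Fib E F, O FF <-> ehom E a FF e.

End ExpDefs.

Inductive gen_open (X : Type) (S : (X -> Prop) -> Prop) : (X -> Prop) -> Prop :=
| go_sub : forall O, S O -> gen_open S O
| go_full : gen_open S (fun _ => True)
| go_inter : forall O1 O2, gen_open S O1 -> gen_open S O2 ->
    gen_open S (fun x => O1 x /\ O2 x)
| go_union : forall (I : Type) (O : I -> X -> Prop),
    (forall i, gen_open S (O i)) -> gen_open S (fun x => exists i, O i x)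
| go_ext : forall O1 O2, gen_open S O1 -> (forall x, O1 x <-> O2 x) ->
    gen_open S O2.

Definition gen_closure (X : Type) (S : (X -> Prop) -> Prop) (Y : X -> Prop)
  (x : X) : Prop :=
  forall O, gen_open S O -> O x -> exists y, O y /\ Y y.


Set Implicit Arguments.
Unset Strict Implicit.

(* The sets [nbhd a e] with [a] the restriction of [x] along [e] form a
   neighbourhood base of [x] in sigma_F: local finiteness amalgamates two of
   them, and unique restrictions make the amalgam's restriction compatible
   with both.  Such a neighbourhood of [FF'] meets the orbit of [FF] exactly
   when [a] lies in [Age FF]: an embedding [e'] of [a] into [FF] is moved onto
   [e] by an automorphism [g] (homogeneity), and any expansion along [g]
   (reasonableness) is a point of the orbit.  Conversely, unique restrictions
   make the inverse of [g] an expansion morphism, so every point of the orbit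
   has the same age as [FF]. *)

Section Restrictions.
Variables (C : Category) (E : Expansion C).
Hypothesis Huniq : unique_restrictions E.

Lemma restriction_unique (A B : C) (b : Fib E B) (e : Hom A B) (a a' : Fib E A) :
  ehom E a b e -> ehom E a' b e -> a = a'.
Proof.
  intros Ha Ha'. destruct (Huniq b e) as (a0 & _ & Hu).
  now rewrite <- (Hu a Ha), (Hu a' Ha').
Qed.

Lemma ehom_restrict (A D X : C) (a : Fib E A) (d : Fib E D) (x : Fib E X)
  (p : Hom A D) (r : Hom D X) :
  ehom E d x r -> ehom E a x (comp r p) -> ehom E a d p.
Proof.
  intros Hr Hrp. destruct (Huniq d p) as (a0 & Ha0 & _).
  replace a with a0; [exact Ha0|].
  apply restriction_unique with (b := x) (e := comp r p); [|exact Hrp].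
  eapply ehom_comp; eauto.
Qed.

Lemma ehom_section (X Y : C) (x : Fib E X) (y : Fib E Y) (h : Hom X Y) (g : Hom Y X) :
  ehom E x y h -> comp h g = idm Y -> ehom E y x g.
Proof.
  intros Hh Hhg. destruct (Huniq x g) as (y0 & Hy0 & _).
  replace y with y0; [exact Hy0|].
  apply restriction_unique with (b := y) (e := idm Y).
  - rewrite <- Hhg. eapply ehom_comp; eauto.
  - apply ehom_id.
Qed.

Lemma orbit_Age_sub (fin : C -> Prop) (F : C) (FF y : Fib E F) (A : C) (a : Fib E A) :
  orbit FF y -> Age fin y a -> Age fin FF a.
Proof.
  intros (g & _ & ginv & Hgginv & Hginvg & Hginv) [HA [e He]].
  split; [exact HA|].
  exists (comp g e). eapply ehom_comp; [exact He|].
  exact (ehom_section Hginv Hginvg).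
Qed.

End Restrictions.

Definition nbhd (C : Category) (E : Expansion C) (A F : C) (a : Fib E A) (e : Hom A F)
  (z : Fib E F) : Prop := ehom E a z e.

Lemma subbasic_nbhd (C : Category) (E : Expansion C) (fin : C -> Prop)
  (A F : C) (a : Fib E A) (e : Hom A F) :
  fin A -> subbasic fin (nbhd a e).
Proof. intros HA. exists A, a, e. split; [exact HA|]. reflexivity. Qed.

Lemma orbit_of_aut (C : Category) (E : Expansion C) (F : C) (FF y : Fib E F)
  (g : Hom F F) :
  is_aut g -> ehom E FF y g -> orbit FF y.
Proof.
  intros (h & Hgh & Hhg) Hg.
  exists h. split.
  - exists g. split; assumption.
  - exists g. repeat split; assumption.
Qed.

Section Neighbourhoods.
Variables (C : Category) (fin : C -> Prop) (E : Expansion C) (F : C).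
Hypotheses (HC4 : C4 fin) (Huniq : unique_restrictions E) (Hlf : locally_finite fin F).

Definition has_basic_nbhd_in (O : Fib E F -> Prop) (x : Fib E F) : Prop :=
  exists (A : C) (a : Fib E A) (e : Hom A F),
    fin A /\ ehom E a x e /\ forall z, nbhd a e z -> O z.

Lemma has_basic_nbhd_in_full (x : Fib E F) : has_basic_nbhd_in (fun _ => True) x.
Proof.
  destruct (HC4 F) as (A & HA & [e]).
  destruct (Huniq x e) as (a & Ha & _).
  exists A, a, e. repeat split; assumption.
Qed.

Lemma has_basic_nbhd_in_meet (O1 O2 : Fib E F -> Prop) (x : Fib E F) :
  has_basic_nbhd_in O1 x -> has_basic_nbhd_in O2 x ->
  has_basic_nbhd_in (fun z => O1 z /\ O2 z) x.
Proof.
  intros (A & a & e & HA & Ha & HO1) (B & b & f & HB & Hb & HO2).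
  destruct (Hlf HA HB e f) as (D & r & p & q & HD & Hrp & Hrq & _).
  destruct (Huniq x r) as (d & Hd & _).
  assert (Hap : ehom E a d p).
  { apply (ehom_restrict Huniq) with (x := x) (r := r); [exact Hd | now rewrite Hrp]. }
  assert (Hbq : ehom E b d q).
  { apply (ehom_restrict Huniq) with (x := x) (r := r); [exact Hd | now rewrite Hrq]. }
  exists D, d, r. split; [exact HD|]. split; [exact Hd|].
  intros z Hz. split.
  - apply HO1. unfold nbhd. rewrite <- Hrp. eapply ehom_comp; eauto.
  - apply HO2. unfold nbhd. rewrite <- Hrq. eapply ehom_comp; eauto.
Qed.

Lemma open_has_basic_nbhd (O : Fib E F -> Prop) (x : Fib E F) :
  gen_open (@subbasic C E fin F) O -> O x -> has_basic_nbhd_in O x.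
Proof.
  intros HO. revert x.
  induction HO as [O HO | | O1 O2 _ IH1 _ IH2 | I O _ IH | O1 O2 _ IH HO12];
    intros x Hx.
  - destruct HO as (A & a & e & HA & HOe).
    exists A, a, e. split; [exact HA|]. split; [now apply HOe|].
    intros z Hz. now apply HOe.
  - apply has_basic_nbhd_in_full.
  - destruct Hx as [Hx1 Hx2].
    exact (has_basic_nbhd_in_meet (IH1 x Hx1) (IH2 x Hx2)).
  - destruct Hx as [i Hi].
    destruct (IH i x Hi) as (A & a & e & HA & Ha & HOi).
    exists A, a, e. repeat split; [assumption..|].
    intros z Hz. exists i. now apply HOi.
  - apply HO12 in Hx.
    destruct (IH x Hx) as (A & a & e & HA & Ha & HO1).
    exists A, a, e. repeat split; [assumption..|].
    intros z Hz. apply HO12. now apply HO1.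
Qed.

End Neighbourhoods.

Lemma Age_nbhd_meets_orbit (C : Category) (fin : C -> Prop) (E : Expansion C)
  (Hreas : reasonable E) (F : C) (Hhom : homogeneous fin F)
  (FF : Fib E F) (A : C) (a : Fib E A) (e : Hom A F) :
  Age fin FF a -> exists y, orbit FF y /\ nbhd a e y.
Proof.
  intros [HA [e' He']].
  destruct (Hhom A HA e' e) as (g & Hg & Hge).
  destruct (Hreas F F g FF) as (y & Hy).
  exists y. split; [exact (orbit_of_aut Hg Hy)|].
  unfold nbhd. rewrite <- Hge. eapply ehom_comp; eauto.
Qed.

Theorem lemma5p11 (C : Category) (fin : C -> Prop)
  (HC1 : C1 C) (HC3 : C3 fin) (HC4 : C4 fin) (HC5 : C5 fin)
  (E : Expansion C) (Hreas : reasonable E) (Huniq : unique_restrictions E)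
  (F : C) (Hhom : homogeneous fin F) (Hlf : locally_finite fin F) :
  forall FF FF' : Fib E F,
    gen_closure (@subbasic C E fin F) (@orbit C E F FF) FF' <->
    (forall (A : C) (a : Fib E A), @Age C E fin F FF' A a -> @Age C E fin F FF A a).
Proof.
  intros FF FF'. split.
  - intros Hcl A a [HA [e He]].
    destruct (Hcl (nbhd a e)) as (y & Hy & Horb).
    + apply go_sub, subbasic_nbhd, HA.
    + exact He.
    + exact (orbit_Age_sub Huniq Horb (conj HA (ex_intro _ e Hy))).
  - intros Hage O HO HFF'.
    destruct (open_has_basic_nbhd HC4 Huniq Hlf HO HFF') as (A & a & e & HA & Ha & HsubO).
    destruct (Age_nbhd_meets_orbit Hreas Hhom e (Hage A a (conj HA (ex_intro _ e Ha))))
      as (y & Horb & Hy).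
    exists y. split; [exact (HsubO y Hy)|exact Horb].
Qed.
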